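(* Let $(H,\alpha_H)$ be a Hom-bialgebra. The category $\mathcal L^H_H$ of Hom-Long dimodules is a monoidal category with: for objects $U,V$, the object $(U\otimes V,\alpha_U\otimes\alpha_V)$ with action $(u\otimes v)\cdot h=u\cdot\alpha_H^{-i-2}(h_1)\otimes v\cdot\alpha_H^{-j-2}(h_2)$ and coaction $u\otimes v\mapsto u_{(0)}\otimes v_{(0)}\otimes\alpha_H^i(u_{(1)})\alpha_H^j(v_{(1)})$; tensor product of morphisms the tensor product of linear maps; unit $(\Bbbk,\mathrm{id})$; associativity and unit constraints those of $\overline{\mathcal H}^{i,j}(Vec_\Bbbk)$.
   Context: $\Bbbk$ field of characteristic $0$; vector spaces finite-dimensional; structure maps $\alpha$ bijective; $i,j$ fixed integers. $\overline{\mathcal H}^{i,j}(Vec_\Bbbk)$: objects $(X,\alpha_X)$ with $\alpha_X$ a linear automorphism; $a_{X,Y,Z}((x\otimes y)\otimes z)=\alpha_X^{i+1}(x)\otimes(y\otimes\alpha_Z^{-j-1}(z))$, $l_X(\lambda\otimes x)=\lambda\alpha_X^{j+1}(x)$, $r_X(x\otimes\lambda)=\lambda\alpha_X^{i+1}(x)$. Hom-bialgebra: Hom-algebra ($\alpha(a)(bc)=(ab)\alpha(c)$, $\alpha(1)=1$, $1a=a1=\alpha(a)$), Hom-coalgebra ($\varepsilon\alpha=\varepsilon$, $\alpha(c_1)\otimes\Delta(c_2)=\Delta(c_1)\otimes\alpha(c_2)$, $\varepsilon(c_1)c_2=c_1\varepsilon(c_2)=\alpha(c)$), $\Delta,\varepsilon$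 unit-preserving Hom-algebra maps. A Hom-Long dimodule is $(U,\alpha_U)$, a right $H$-Hom-module ($(u\cdot a)\cdot\alpha_H(b)=\alpha_U(u)\cdot(ab)$, $u\cdot1_H=\alpha_U(u)$) and right $H$-Hom-comodule ($\rho(u)=u_{(0)}\otimes u_{(1)}$, $\alpha_U(u_{(0)})\otimes\Delta(u_{(1)})=\rho(u_{(0)})\otimes\alpha_H(u_{(1)})$, $\varepsilon(u_{(1)})u_{(0)}=\alpha_U(u)$), structure maps commuting with the $\alpha$'s, such that $\rho(u\cdot h)=u_{(0)}\cdot\alpha_H(h)\otimes\alpha_H(u_{(1)})$; morphisms are $H$-linear, $H$-colinear maps commuting with the $\alpha$'s. *)

(* Finite-dimensional vector spaces over K are modelled as
   row spaces 'rV[K]_n; linear maps as matrices acting on the right (v *m A);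
   the tensor product 'rV_n (x) 'rV_m is 'rV_(n*m) with u (x) v := mxvec (u^T *m v). *)
From HB Require Import structures.
From mathcomp Require Import all_boot all_order all_algebra.
Set Implicit Arguments. Unset Strict Implicit. Unset Printing Implicit Defensive.
Import GRing.Theory.
Local Open Scope ring_scope.

Section Tensors.
Variable K : fieldType.

Definition tens {n m} (u : 'rV[K]_n) (v : 'rV[K]_m) : 'rV[K]_(n * m) :=
  mxvec (u^T *m v).

Definition evec {n} (a : 'I_n) : 'rV[K]_n := delta_mx 0 a.

(* the matrix of the linear map V (x) W -> P induced by a bilinear map f:
   tens u v *m bil f = f u v  for bilinear f *)
Definition bil {n m p} (f : 'rV[K]_n -> 'rV[K]_m -> 'rV[K]_p) : 'M[K]_(n * m, p) :=
  \sum_(a < n) \sum_(b < m)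
     delta_mx (mxvec_index a b) (0 : 'I_1) *m f (evec a) (evec b).

(* Sweedler-style application: for x = sum x1 (x) x2, tapp f x = sum f x1 x2 *)
Definition tapp {n m p} (f : 'rV[K]_n -> 'rV[K]_m -> 'rV[K]_p)
  (x : 'rV[K]_(n * m)) : 'rV[K]_p := x *m bil f.

Definition kron {n n' m m'} (A : 'M[K]_(n, n')) (B : 'M[K]_(m, m')) :
  'M[K]_(n * m, n' * m') := bil (fun u v => tens (u *m A) (v *m B)).

Definition mxzpow {n} (A : 'M[K]_n) (k : int) : 'M[K]_n :=
  match k with
  | Posz p => A ^+ p
  | Negz p => (invmx A) ^+ p.+1
  end.

End Tensors.

Record HomBialg (K : fieldType) (h : nat) := HomBialgebra {
  hb_alpha : 'M[K]_h;
  hb_mul : 'M[K]_(h * h, h);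
  hb_unit : 'rV[K]_h;
  hb_comul : 'M[K]_(h, h * h);
  hb_counit : 'cV[K]_h
}.

Section HomBialgebra.
Variables (K : fieldType) (h : nat) (H : HomBialg K h).

Definition mulH (a b : 'rV[K]_h) : 'rV[K]_h := tens a b *m hb_mul H.
Definition alH (a : 'rV[K]_h) : 'rV[K]_h := a *m hb_alpha H.
Definition DeltaH (a : 'rV[K]_h) : 'rV[K]_(h * h) := a *m hb_comul H.
Definition epsH (a : 'rV[K]_h) : K := (a *m hb_counit H) 0 0.
(* multiplication of the tensor product Hom-algebra H (x) H *)
Definition mulHH (x y : 'rV[K]_(h * h)) : 'rV[K]_(h * h) :=
  tapp (fun a b => tapp (fun c d => tens (mulH a c) (mulH b d)) y) x.

Definition is_HomBialgebra : Prop :=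
  hb_alpha H \in unitmx /\
  (forall a b c, mulH (alH a) (mulH b c) = mulH (mulH a b) (alH c)) /\
  alH (hb_unit H) = hb_unit H /\
  (forall a, mulH (hb_unit H) a = alH a) /\
  (forall a, mulH a (hb_unit H) = alH a) /\
  (forall a b, alH (mulH a b) = mulH (alH a) (alH b)) /\
  (forall a, epsH (alH a) = epsH a) /\
  (forall c, castmx (erefl 1%N, mulnA h h h)
                (tapp (fun c1 c2 => tens (alH c1) (DeltaH c2)) (DeltaH c))
             = tapp (fun c1 c2 => tens (DeltaH c1) (alH c2)) (DeltaH c)) /\
  (forall c, tapp (fun c1 c2 => epsH c1 *: c2) (DeltaH c) = alH c) /\
  (forall c, tapp (fun c1 c2 => epsH c2 *: c1) (DeltaH c) = alH c) /\
  (forall c, DeltaH (alH c) = DeltaH c *m kron (hb_alpha H) (hb_alpha H)) /\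
  (forall a b, DeltaH (mulH a b) = mulHH (DeltaH a) (DeltaH b)) /\
  DeltaH (hb_unit H) = tens (hb_unit H) (hb_unit H) /\
  (forall a b, epsH (mulH a b) = epsH a * epsH b) /\
  epsH (hb_unit H) = 1.

End HomBialgebra.

Record LDimod (K : fieldType) (h : nat) := LDim {
  ld_dim : nat;
  ld_alpha : 'M[K]_ld_dim;
  ld_act : 'M[K]_(ld_dim * h, ld_dim);
  ld_coact : 'M[K]_(ld_dim, ld_dim * h)
}.

Section LongDimodules.
Variables (K : fieldType) (h : nat) (H : HomBialg K h) (i j : int).

Definition actD (U : LDimod K h) (u : 'rV[K]_(ld_dim U)) (a : 'rV[K]_h)
  : 'rV[K]_(ld_dim U) := tens u a *m ld_act U.
Definition coD (U : LDimod K h) (u : 'rV[K]_(ld_dim U))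
  : 'rV[K]_(ld_dim U * h) := u *m ld_coact U.
Definition alD (U : LDimod K h) (u : 'rV[K]_(ld_dim U))
  : 'rV[K]_(ld_dim U) := u *m ld_alpha U.

Arguments actD : clear implicits.
Arguments coD : clear implicits.
Arguments alD : clear implicits.

Definition is_LongDimod (U : LDimod K h) : Prop :=
  ld_alpha U \in unitmx /\
  (forall u a b, actD U (actD U u a) (alH H b) = actD U (alD U u) (mulH H a b)) /\
  (forall u, actD U u (hb_unit H) = alD U u) /\
  (forall u, castmx (erefl 1%N, mulnA (ld_dim U) h h)
                (tapp (fun u0 u1 => tens (alD U u0) (DeltaH H u1)) (coD U u))
             = tapp (fun u0 u1 => tens (coD U u0) (alH H u1)) (coD U u)) /\
  (forall u, tapp (fun u0 u1 => epsH H u1 *: u0) (coD U u) = alD U u) /\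
  (forall u a, alD U (actD U u a) = actD U (alD U u) (alH H a)) /\
  (forall u, coD U (alD U u) = coD U u *m kron (ld_alpha U) (hb_alpha H)) /\
  (forall u a, coD U (actD U u a)
       = tapp (fun u0 u1 => tens (actD U u0 (alH H a)) (alH H u1)) (coD U u)).

Definition is_LDmorph (U V : LDimod K h) (f : 'M[K]_(ld_dim U, ld_dim V)) : Prop :=
  (forall u a, actD U u a *m f = actD V (u *m f) a) /\
  (forall u, coD V (u *m f) = coD U u *m kron f 1%:M) /\
  ld_alpha U *m f = f *m ld_alpha V.

Arguments is_LDmorph : clear implicits.

Definition is_LDiso (U V : LDimod K h) (f : 'M[K]_(ld_dim U, ld_dim V)) : Prop :=
  is_LDmorph U V f /\
  exists g : 'M[K]_(ld_dim V, ld_dim U),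
    is_LDmorph V U g /\ f *m g = 1%:M /\ g *m f = 1%:M.

Arguments is_LDiso : clear implicits.

Local Notation aH k := (mxzpow (hb_alpha H) k).

Definition tensD (U V : LDimod K h) : LDimod K h :=
  @LDim K h (ld_dim U * ld_dim V) (kron (ld_alpha U) (ld_alpha V))
    (bil (fun x a =>
       tapp (fun u v =>
         tapp (fun a1 a2 =>
           tens (actD U u (a1 *m aH (- i - 2))) (actD V v (a2 *m aH (- j - 2))))
           (DeltaH H a)) x))
    (bil (fun u v =>
       tapp (fun u0 u1 =>
         tapp (fun v0 v1 =>
           tens (tens u0 v0) (mulH H (u1 *m aH i) (v1 *m aH j)))
           (coD V v))
         (coD U u))).

(* unit object (k, id): action lambda . a = eps(a) lambda, coaction lambda |-> lambda (x) 1_H *)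
Definition unitD : LDimod K h :=
  @LDim K h 1 1%:M
    (castmx (esym (mul1n h), erefl 1%N) (hb_counit H))
    (castmx (erefl 1%N, esym (mul1n h)) (hb_unit H)).

Definition assocD (U V W : LDimod K h) :
  'M[K]_((ld_dim U * ld_dim V) * ld_dim W, ld_dim U * (ld_dim V * ld_dim W)) :=
  castmx (erefl _, esym (mulnA _ _ _))
    (kron (kron (mxzpow (ld_alpha U) (i + 1)) 1%:M) (mxzpow (ld_alpha W) (- j - 1))).

Definition lunitD (U : LDimod K h) : 'M[K]_(1 * ld_dim U, ld_dim U) :=
  castmx (erefl _, mul1n _) (kron (1%:M : 'M[K]_1) (mxzpow (ld_alpha U) (j + 1))).

Definition runitD (U : LDimod K h) : 'M[K]_(ld_dim U * 1, ld_dim U) :=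
  castmx (erefl _, muln1 _) (kron (mxzpow (ld_alpha U) (i + 1)) (1%:M : 'M[K]_1)).

Definition LongDimod_monoidal : Prop :=
  (forall U V, is_LongDimod U -> is_LongDimod V -> is_LongDimod (tensD U V)) /\
  is_LongDimod unitD /\
  (forall U U' V V' (f : 'M[K]_(ld_dim U, ld_dim U')) (g : 'M[K]_(ld_dim V, ld_dim V')),
     is_LongDimod U -> is_LongDimod U' -> is_LongDimod V -> is_LongDimod V' ->
     is_LDmorph U U' f -> is_LDmorph V V' g ->
     is_LDmorph (tensD U V) (tensD U' V') (kron f g)) /\
  (forall U V, is_LongDimod U -> is_LongDimod V ->
     kron (1%:M : 'M[K]_(ld_dim U)) (1%:M : 'M[K]_(ld_dim V)) = 1%:M) /\
  (forall U U' U'' V V' V'' (f : 'M[K]_(ld_dim U, ld_dim U')) (f' : 'M[K]_(ld_dim U', ld_dim U''))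
         (g : 'M[K]_(ld_dim V, ld_dim V')) (g' : 'M[K]_(ld_dim V', ld_dim V'')),
     is_LongDimod U -> is_LongDimod U' -> is_LongDimod U'' ->
     is_LongDimod V -> is_LongDimod V' -> is_LongDimod V'' ->
     is_LDmorph U U' f -> is_LDmorph U' U'' f' ->
     is_LDmorph V V' g -> is_LDmorph V' V'' g' ->
     kron (f *m f') (g *m g') = kron f g *m kron f' g') /\
  (forall U V W, is_LongDimod U -> is_LongDimod V -> is_LongDimod W ->
     is_LDiso (tensD (tensD U V) W) (tensD U (tensD V W)) (assocD U V W)) /\
  (forall U, is_LongDimod U -> is_LDiso (tensD unitD U) U (lunitD U)) /\
  (forall U, is_LongDimod U -> is_LDiso (tensD U unitD) U (runitD U)) /\
  (forall U U' V V' W W' (f : 'M[K]_(ld_dim U, ld_dim U')) (g : 'M[K]_(ld_dim V, ld_dim V'))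
         (k : 'M[K]_(ld_dim W, ld_dim W')),
     is_LongDimod U -> is_LongDimod U' -> is_LongDimod V -> is_LongDimod V' ->
     is_LongDimod W -> is_LongDimod W' ->
     is_LDmorph U U' f -> is_LDmorph V V' g -> is_LDmorph W W' k ->
     kron (kron f g) k *m assocD U' V' W' = assocD U V W *m kron f (kron g k)) /\
  (forall U U' (f : 'M[K]_(ld_dim U, ld_dim U')),
     is_LongDimod U -> is_LongDimod U' -> is_LDmorph U U' f ->
     kron (1%:M : 'M[K]_1) f *m lunitD U' = lunitD U *m f) /\
  (forall U U' (f : 'M[K]_(ld_dim U, ld_dim U')),
     is_LongDimod U -> is_LongDimod U' -> is_LDmorph U U' f ->
     kron f (1%:M : 'M[K]_1) *m runitD U' = runitD U *m f) /\
  (forall U V W X, is_LongDimod U -> is_LongDimod V -> is_LongDimod W -> is_LongDimod X ->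
     assocD (tensD U V) W X *m assocD U V (tensD W X)
     = kron (assocD U V W) (1%:M : 'M[K]_(ld_dim X)) *m assocD U (tensD V W) X
       *m kron (1%:M : 'M[K]_(ld_dim U)) (assocD V W X)) /\
  (forall U V, is_LongDimod U -> is_LongDimod V ->
     assocD U unitD V *m kron (1%:M : 'M[K]_(ld_dim U)) (lunitD V)
     = kron (runitD U) (1%:M : 'M[K]_(ld_dim V))).

End LongDimodules.

(* Every structure map is linear, and a linear map on 'rV_(n * m) is determined
   by its values on pure tensors u (x) v, so all identities are checked on pure
   tensors, with Sweedler sums encoded by [tapp].  The integer powers of the
   alphas commute with every structure map (alpha_H is a Hom-bialgebra
   automorphism, alpha_U a dimodule automorphism), so the twisting exponents in
   the action, coaction and constraints can be collected and compared as
   integers.  The dimodule axioms of U (x) V then follow from those of U and V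
   together with coassociativity and multiplicativity of Delta; the
   constraints are isomorphisms with inverses given by the opposite powers,
   and the pentagon and triangle reduce to additivity of the exponents. *)

From HB Require Import structures.
From mathcomp Require Import all_boot all_order all_algebra zify.
Import GRing.Theory.
Local Open Scope ring_scope.

Set Implicit Arguments. Unset Strict Implicit. Unset Printing Implicit Defensive.

Lemma index_allpairs (T1 T2 : eqType) (s : seq T1) (t : seq T2) x y :
  x \in s -> y \in t ->
  index (x, y) [seq (x1, x2) | x1 <- s, x2 <- t] = (index x s * size t + index y t)%N.
Proof.
move=> xs yt; elim: s xs => [//|x0 s IH] /=; rewrite inE => xs.
rewrite index_cat; case: (eqVneq x0 x) => [->|nx] /=.
  have pinj : injective (fun z : T2 => (x, z)) by move=> ? ? E; have := congr1 snd E.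
  by rewrite (mem_map pinj) yt index_map ?mul0n ?add0n.
have -> : ((x, y) \in [seq (x0, x2) | x2 <- t]) = false.
  by apply/mapP => -[z _ [E _]]; move: nx; rewrite E eqxx.
rewrite eq_sym in nx; rewrite (negbTE nx) /= in xs *.
by rewrite IH // size_map mulSn addnA.
Qed.

Lemma mxvec_indexE n m (a : 'I_n) (b : 'I_m) :
  nat_of_ord (mxvec_index a b) = (a * m + b)%N.
Proof.
rewrite /mxvec_index /= /enum_rank enum_rank_in.unlock insubdK; last first.
  by rewrite unfold_in /= cardE index_mem mem_enum.
rewrite enumT /=.
have -> : Finite.enum ('I_n * 'I_m)%type = prod_enum 'I_n 'I_m by rewrite unlock.
by rewrite /prod_enum index_allpairs ?mem_enum // !index_enum_ord size_enum_ord.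
Qed.

Section RowTensors.
Variable K : fieldType.

Definition lin {n p} (g : 'rV[K]_n -> 'rV[K]_p) :=
  forall (c : K) u v, g (c *: u + v) = c *: g u + g v.
Definition linform {n} (s : 'rV[K]_n -> K) :=
  forall (c : K) u v, s (c *: u + v) = c * s u + s v.
Definition bilin {n m p} (f : 'rV[K]_n -> 'rV[K]_m -> 'rV[K]_p) :=
  (forall v, lin (fun u => f u v)) /\ (forall u, lin (f u)).

Lemma lin0 n p (g : 'rV[K]_n -> 'rV[K]_p) : lin g -> g 0 = 0.
Proof.
move=> Lg; have := Lg 1 0 0; rewrite !scale1r !addr0.
by move/(congr1 (fun x => x - g 0)); rewrite addrK subrr => <-.
Qed.

Lemma linZ n p (g : 'rV[K]_n -> 'rV[K]_p) : lin g -> forall c u, g (c *: u) = c *: g u.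
Proof. by move=> Lg c u; have := Lg c u 0; rewrite addr0 lin0 // addr0. Qed.

Lemma linD n p (g : 'rV[K]_n -> 'rV[K]_p) : lin g -> forall u v, g (u + v) = g u + g v.
Proof. by move=> Lg u v; have := Lg 1 u v; rewrite !scale1r. Qed.

Lemma lin_sum n p (g : 'rV[K]_n -> 'rV[K]_p) I (r : seq I) (P : pred I) F :
  lin g -> g (\sum_(k <- r | P k) F k) = \sum_(k <- r | P k) g (F k).
Proof.
move=> Lg; elim/big_rec2: _ => [|k y1 y2 _ <-]; first exact: lin0.
by rewrite linD.
Qed.

Lemma lin_id n : lin (fun u : 'rV[K]_n => u).
Proof. by []. Qed.

Lemma lin_mulmx n p q (g : 'rV[K]_n -> 'rV[K]_p) (M : 'M[K]_(p, q)) :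
  lin g -> lin (fun u => g u *m M).
Proof. by move=> Lg c u v; rewrite Lg mulmxDl scalemxAl. Qed.

Lemma lin_mulmx_id n q (M : 'M[K]_(n, q)) : lin (fun u => u *m M).
Proof. exact: (lin_mulmx _ (@lin_id n)). Qed.

Lemma tensDl n m (u1 u2 : 'rV[K]_n) (v : 'rV[K]_m) :
  tens (u1 + u2) v = tens u1 v + tens u2 v.
Proof. by rewrite /tens linearD /= mulmxDl linearD. Qed.
Lemma tensZl n m c (u : 'rV[K]_n) (v : 'rV[K]_m) : tens (c *: u) v = c *: tens u v.
Proof. by rewrite /tens linearZ /= -scalemxAl linearZ. Qed.
Lemma tensDr n m (u : 'rV[K]_n) (v1 v2 : 'rV[K]_m) :
  tens u (v1 + v2) = tens u v1 + tens u v2.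
Proof. by rewrite /tens mulmxDr linearD. Qed.
Lemma tensZr n m c (u : 'rV[K]_n) (v : 'rV[K]_m) : tens u (c *: v) = c *: tens u v.
Proof. by rewrite /tens -scalemxAr linearZ. Qed.

Lemma lin_tensl n m p (g : 'rV[K]_n -> 'rV[K]_p) (w : 'rV[K]_m) :
  lin g -> lin (fun u => tens (g u) w).
Proof. by move=> Lg c u v; rewrite Lg tensDl tensZl. Qed.
Lemma lin_tensr n m p (g : 'rV[K]_n -> 'rV[K]_p) (w : 'rV[K]_m) :
  lin g -> lin (fun u => tens w (g u)).
Proof. by move=> Lg c u v; rewrite Lg tensDr tensZr. Qed.

Lemma lin_tapp_arg n m p q (f : 'rV[K]_n -> 'rV[K]_m -> 'rV[K]_p)
  (g : 'rV[K]_q -> 'rV[K]_(n * m)) : lin g -> lin (fun u => tapp f (g u)).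
Proof. by move=> Lg; apply: lin_mulmx. Qed.

Lemma lin_tapp_fun n m p q (F : 'rV[K]_q -> 'rV[K]_n -> 'rV[K]_m -> 'rV[K]_p)
  (y : 'rV[K]_(n * m)) :
  (forall a b, lin (fun u => F u a b)) -> lin (fun u => tapp (F u) y).
Proof.
move=> LF c u v; rewrite /tapp scalemxAr -mulmxDr /bil scaler_sumr -big_split.
congr (_ *m _); apply: eq_bigr => a _; rewrite scaler_sumr -big_split.
by apply: eq_bigr => b _; rewrite LF mulmxDr scalemxAr.
Qed.

Lemma lin_castmx n p p' (e : (1 = 1)%N * (p = p')) (g : 'rV[K]_n -> 'rV[K]_p) :
  lin g -> lin (fun u => castmx e (g u)).
Proof. by move=> Lg c u v; apply/matrixP => x y; rewrite Lg !(castmxE, mxE). Qed.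
Lemma lin_scale_form n p (s : 'rV[K]_n -> K) (w : 'rV[K]_p) :
  linform s -> lin (fun u => s u *: w).
Proof. by move=> Ls c u v; rewrite Ls scalerDl scalerA. Qed.

Lemma lin_scaleC n p c (g : 'rV[K]_n -> 'rV[K]_p) :
  lin g -> lin (fun u => c *: g u).
Proof. by move=> Lg d u v; rewrite Lg scalerDr !scalerA mulrC. Qed.

Lemma lin_add n p (g1 g2 : 'rV[K]_n -> 'rV[K]_p) :
  lin g1 -> lin g2 -> lin (fun u => g1 u + g2 u).
Proof.
move=> L1 L2 c u v; rewrite L1 L2 scalerDr -!addrA; congr (_ + _).
by rewrite addrCA.
Qed.

Lemma linform_entry n p (g : 'rV[K]_n -> 'rV[K]_p) (k : 'I_p) :
  lin g -> linform (fun u => g u 0 k).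
Proof. by move=> Lg c u v; rewrite Lg !mxE. Qed.

Lemma tens_evec n m (a : 'I_n) (b : 'I_m) :
  tens (evec K a) (evec K b) = delta_mx 0 (mxvec_index a b).
Proof. by rewrite /tens /evec trmx_delta mul_delta_mx mxvec_delta. Qed.

Lemma mxvec_index_inj n m (a a' : 'I_n) (b b' : 'I_m) :
  (mxvec_index a b == mxvec_index a' b') = ((a == a') && (b == b')).
Proof.
apply/eqP/andP => [|[/eqP-> /eqP->] //].
by move/cast_ord_inj/enum_rank_inj => [-> ->].
Qed.

Lemma tapp_evec n m p (f : 'rV[K]_n -> 'rV[K]_m -> 'rV[K]_p) a b :
  tapp f (tens (evec K a) (evec K b)) = f (evec K a) (evec K b).
Proof.
rewrite /tapp /bil tens_evec mulmx_sumr (bigD1 a) //=.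
rewrite [X in _ + X]big1 => [|a' na']; last first.
  rewrite mulmx_sumr big1 // => b' _.
  by rewrite mulmxA mul_delta_mx_0 ?mul0mx // mxvec_index_inj eq_sym (negbTE na').
rewrite addr0 mulmx_sumr (bigD1 b) //=.
rewrite [X in _ + X]big1 => [|b' nb'].
  by rewrite addr0 mulmxA mul_delta_mx -rowE; apply/rowP => k; rewrite !mxE.
by rewrite mulmxA mul_delta_mx_0 ?mul0mx // mxvec_index_inj eqxx eq_sym (negbTE nb').
Qed.

Lemma tapp_tens n m p (f : 'rV[K]_n -> 'rV[K]_m -> 'rV[K]_p) u v :
  bilin f -> tapp f (tens u v) = f u v.
Proof.
move=> [L1 L2]; rewrite [in LHS](row_sum_delta u) [in RHS](row_sum_delta u) /tapp.
rewrite (lin_sum _ _ _ (lin_tensl _ (@lin_id _))).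
rewrite (lin_sum _ _ _ (lin_mulmx_id _)) (lin_sum _ _ _ (L1 v)).
apply: eq_bigr => a _.
rewrite tensZl (linZ (lin_mulmx_id _)) (linZ (L1 v)); congr (_ *: _).
rewrite [in LHS](row_sum_delta v) [in RHS](row_sum_delta v).
rewrite (lin_sum _ _ _ (lin_tensr _ (@lin_id _))).
rewrite (lin_sum _ _ _ (lin_mulmx_id _)) (lin_sum _ _ _ (L2 _)).
apply: eq_bigr => b _.
by rewrite tensZr (linZ (lin_mulmx_id _)) (linZ (L2 _)) -/(tapp f _) tapp_evec.
Qed.

Lemma lin_tens_eq n m p (F G : 'rV[K]_(n * m) -> 'rV[K]_p) :
  lin F -> lin G -> (forall a b, F (tens a b) = G (tens a b)) ->
  forall x, F x = G x.
Proof.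
move=> LF LG E x; rewrite (row_sum_delta x) (lin_sum _ _ _ LF) (lin_sum _ _ _ LG).
apply: eq_bigr => k _; rewrite (linZ LF) (linZ LG); congr (_ *: _).
by case/mxvec_indexP: k => a b; rewrite -tens_evec E.
Qed.

Lemma mx_tens_eq n m p (M N : 'M[K]_(n * m, p)) :
  (forall a b, tens a b *m M = tens a b *m N) -> M = N.
Proof.
move=> E; apply/row_matrixP => k; rewrite !rowE.
by apply: (lin_tens_eq (lin_mulmx_id M) (lin_mulmx_id N)).
Qed.

Lemma tensE n m (x : 'rV[K]_n) (y : 'rV[K]_m) a b :
  tens x y 0 (mxvec_index a b) = x 0 a * y 0 b.
Proof. by rewrite /tens mxvecE mxE big_ord1 mxE. Qed.

Lemma tens_assoc n m p (u : 'rV[K]_n) (v : 'rV[K]_m) (w : 'rV[K]_p) :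
  castmx (erefl 1%N, mulnA n m p) (tens u (tens v w)) = tens (tens u v) w.
Proof.
apply/rowP => k; case/mxvec_indexP: k => ab c; case/mxvec_indexP: ab => a b.
rewrite castmxE /= !tensE.
have -> : cast_ord (esym (mulnA n m p)) (mxvec_index (mxvec_index a b) c)
          = mxvec_index a (mxvec_index b c).
  have E : nat_of_ord (mxvec_index (mxvec_index a b) c)
          = nat_of_ord (@mxvec_index n (m * p) a (mxvec_index b c)).
    by rewrite !mxvec_indexE mulnDl -mulnA addnA.
  by apply: val_inj; exact: E.
by rewrite (ord1 (cast_ord _ _)) !tensE mulrA.
Qed.

Lemma tens_assocV n m p (u : 'rV[K]_n) (v : 'rV[K]_m) (w : 'rV[K]_p) :
  castmx (erefl 1%N, esym (mulnA n m p)) (tens (tens u v) w) = tens u (tens v w).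
Proof. by rewrite -tens_assoc castmx_comp castmx_id. Qed.

Lemma lin_comp n p q (F : 'rV[K]_p -> 'rV[K]_q) (g : 'rV[K]_n -> 'rV[K]_p) :
  lin F -> lin g -> lin (fun u => F (g u)).
Proof. by move=> LF Lg c u v; rewrite Lg LF. Qed.

End RowTensors.

Ltac lin_tac :=
  repeat first
   [ apply lin_id
   | apply lin_tensl
   | apply lin_tensr
   | apply lin_tapp_arg
   | apply lin_tapp_fun; intros
   | apply lin_castmx
   | apply lin_scale_form
   | apply lin_scaleC
   | apply lin_add
   | apply linform_entry
   | apply lin_mulmx ].

Ltac bilin_tac := split; intros; lin_tac.

Section TensorApplication.
Variable K : fieldType.

Lemma eq_tapp n m p (f g : 'rV[K]_n -> 'rV[K]_m -> 'rV[K]_p) x :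
  (forall a b, f a b = g a b) -> tapp f x = tapp g x.
Proof.
by move=> E; rewrite /tapp /bil; congr (_ *m _); apply: eq_bigr => a _;
  apply: eq_bigr => b _; rewrite E.
Qed.

Lemma tapp_mulmx n m p q (f : 'rV[K]_n -> 'rV[K]_m -> 'rV[K]_p) (M : 'M[K]_(p, q)) x :
  tapp f x *m M = tapp (fun a b => f a b *m M) x.
Proof.
rewrite /tapp /bil -mulmxA mulmx_suml; congr (_ *m _); apply: eq_bigr => a _.
by rewrite mulmx_suml; apply: eq_bigr => b _; rewrite mulmxA.
Qed.

Lemma tapp_tapp n m p n' m' (f : 'rV[K]_n -> 'rV[K]_m -> 'rV[K]_p)
  (g : 'rV[K]_n' -> 'rV[K]_m' -> 'rV[K]_(n * m)) x :
  tapp f (tapp g x) = tapp (fun a b => tapp f (g a b)) x.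
Proof. by rewrite {1}/tapp tapp_mulmx. Qed.

Lemma tapp_push n m p q (f : 'rV[K]_n -> 'rV[K]_m -> 'rV[K]_p) (Phi : 'rV[K]_p -> 'rV[K]_q) y :
  lin Phi -> bilin f -> Phi (tapp f y) = tapp (fun a b => Phi (f a b)) y.
Proof.
move=> LPhi [B1 B2]; move: y; apply: lin_tens_eq.
- exact: lin_comp LPhi (lin_mulmx_id _).
- exact: lin_mulmx_id.
by move=> a b; rewrite !tapp_tens //; split=> ?; exact: lin_comp.
Qed.

Lemma exchange_tapp n m n' m' p
  (F : 'rV[K]_n -> 'rV[K]_m -> 'rV[K]_n' -> 'rV[K]_m' -> 'rV[K]_p) x y :
  (forall b c d, lin (fun a => F a b c d)) ->
  (forall a c d, lin (fun b => F a b c d)) ->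
  (forall a b d, lin (fun c => F a b c d)) ->
  (forall a b c, lin (fun d => F a b c d)) ->
  tapp (fun a b => tapp (F a b) y) x = tapp (fun c d => tapp (fun a b => F a b c d) x) y.
Proof.
move=> L1 L2 L3 L4; move: x; apply: lin_tens_eq.
- exact: lin_mulmx_id.
- by apply: lin_tapp_fun => c d; exact: lin_mulmx_id.
move=> a b; rewrite tapp_tens; last first.
  by split=> ?; apply: lin_tapp_fun => c d; by [apply: L1|apply: L2].
by apply: eq_tapp => c d; rewrite tapp_tens //; split=> ?; by [apply: L1|apply: L2].
Qed.

Lemma tens_tappl n m p q (f : 'rV[K]_n -> 'rV[K]_m -> 'rV[K]_p) y (w : 'rV[K]_q) :
  bilin f -> tens (tapp f y) w = tapp (fun a b => tens (f a b) w) y.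
Proof. by move=> Bf; rewrite (tapp_push (Phi := fun z => tens z w)) //; lin_tac. Qed.

Lemma tens_tappr n m p q (f : 'rV[K]_n -> 'rV[K]_m -> 'rV[K]_p) y (w : 'rV[K]_q) :
  bilin f -> tens w (tapp f y) = tapp (fun a b => tens w (f a b)) y.
Proof. by move=> Bf; rewrite (tapp_push (Phi := fun z => tens w z)) //; lin_tac. Qed.

Lemma tapp_kron n m n' m' (A : 'M[K]_(n, n')) (B : 'M[K]_(m, m')) x :
  x *m kron A B = tapp (fun a b => tens (a *m A) (b *m B)) x.
Proof. by []. Qed.

Lemma lin_tens3_eq n m p q (F G : 'rV[K]_((n * m) * p) -> 'rV[K]_q) :
  lin F -> lin G -> (forall u v w, F (tens (tens u v) w) = G (tens (tens u v) w)) ->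
  forall x, F x = G x.
Proof.
move=> LF LG E; apply: lin_tens_eq => // y w; move: y.
apply: (lin_tens_eq (F := fun y => F (tens y w)) (G := fun y => G (tens y w))) => //.
- by apply: lin_comp => //; apply: lin_tensl; exact: lin_id.
- by apply: lin_comp => //; apply: lin_tensl; exact: lin_id.
Qed.

Lemma lin_tens3r_eq n m p q (F G : 'rV[K]_(n * (m * p)) -> 'rV[K]_q) :
  lin F -> lin G -> (forall u v w, F (tens u (tens v w)) = G (tens u (tens v w))) ->
  forall x, F x = G x.
Proof.
move=> LF LG E; apply: lin_tens_eq => // u y; move: y.
apply: (lin_tens_eq (F := fun y => F (tens u y)) (G := fun y => G (tens u y))) => //.
- by apply: lin_comp => //; apply: lin_tensr; exact: lin_id.
- by apply: lin_comp => //; apply: lin_tensr; exact: lin_id.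
Qed.

Lemma lin_tens4_eq n m p r q (F G : 'rV[K]_(((n * m) * p) * r) -> 'rV[K]_q) :
  lin F -> lin G ->
  (forall u v w x, F (tens (tens (tens u v) w) x) = G (tens (tens (tens u v) w) x)) ->
  forall y, F y = G y.
Proof.
move=> LF LG E; apply: lin_tens_eq => // y x; move: y.
apply: (lin_tens3_eq (F := fun y => F (tens y x)) (G := fun y => G (tens y x))) => //.
- by apply: lin_comp => //; apply: lin_tensl; exact: lin_id.
- by apply: lin_comp => //; apply: lin_tensl; exact: lin_id.
Qed.

Lemma mx_tens_eq3 n m p q (M N : 'M[K]_((n * m) * p, q)) :
  (forall u v w, tens (tens u v) w *m M = tens (tens u v) w *m N) -> M = N.
Proof.
move=> E; apply/row_matrixP => k; rewrite !rowE.
by apply: (lin_tens3_eq (lin_mulmx_id M) (lin_mulmx_id N)).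
Qed.

Lemma mx_tens_eq3r n m p q (M N : 'M[K]_(n * (m * p), q)) :
  (forall u v w, tens u (tens v w) *m M = tens u (tens v w) *m N) -> M = N.
Proof.
move=> E; apply/row_matrixP => k; rewrite !rowE.
by apply: (lin_tens3r_eq (lin_mulmx_id M) (lin_mulmx_id N)).
Qed.

Lemma mx_tens_eq4 n m p r q (M N : 'M[K]_(((n * m) * p) * r, q)) :
  (forall u v w x, tens (tens (tens u v) w) x *m M = tens (tens (tens u v) w) x *m N) -> M = N.
Proof.
move=> E; apply/row_matrixP => k; rewrite !rowE.
by apply: (lin_tens4_eq (lin_mulmx_id M) (lin_mulmx_id N)).
Qed.

Lemma mx_row_eq n q (M N : 'M[K]_(n, q)) : (forall u : 'rV[K]_n, u *m M = u *m N) -> M = N.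
Proof. by move=> E; apply/row_matrixP => k; rewrite !rowE. Qed.

Lemma mulmx_castl a p q r (e : p = q) (x : 'M[K]_(a, q)) (M : 'M[K]_(p, r)) :
  x *m castmx (e, erefl) M = castmx (erefl, esym e) x *m M.
Proof. by case: q / e x => x; rewrite !castmx_id. Qed.

Lemma castmx_mulr a p q r (e : q = r) (x : 'M[K]_(a, p)) (M : 'M[K]_(p, q)) :
  castmx (erefl, e) (x *m M) = x *m castmx (erefl, e) M.
Proof. by case: r / e; rewrite !castmx_id. Qed.

Lemma tens1l (l : 'rV[K]_1) n (w : 'rV[K]_n) :
  castmx (erefl 1%N, mul1n n) (tens l w) = l 0 0 *: w.
Proof.
apply/rowP => k; rewrite castmxE mxE.
have -> : cast_ord (esym (mul1n n)) k = mxvec_index (0 : 'I_1) k.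
  have E : nat_of_ord (@mxvec_index 1 n 0 k) = k by rewrite mxvec_indexE.
  by apply: val_inj; symmetry; exact: E.
by rewrite (ord1 (cast_ord _ _)) tensE.
Qed.

Lemma tens1r n (w : 'rV[K]_n) (l : 'rV[K]_1) :
  castmx (erefl 1%N, muln1 n) (tens w l) = l 0 0 *: w.
Proof.
apply/rowP => k; rewrite castmxE mxE.
have -> : cast_ord (esym (muln1 n)) k = mxvec_index k (0 : 'I_1).
  have E : nat_of_ord (@mxvec_index n 1 k 0) = k by rewrite mxvec_indexE muln1 addn0.
  by apply: val_inj; symmetry; exact: E.
by rewrite (ord1 (cast_ord _ _)) tensE mulrC.
Qed.

Lemma tens1lV (l : 'rV[K]_1) n (w : 'rV[K]_n) :
  tens l w = castmx (erefl 1%N, esym (mul1n n)) (l 0 0 *: w).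
Proof. by rewrite -tens1l castmx_comp castmx_id. Qed.

Lemma tens1_rowV n (w : 'rV[K]_n) :
  tens (1%:M : 'rV[K]_1) w = castmx (erefl 1%N, esym (mul1n n)) w.
Proof. by rewrite tens1lV mxE scale1r. Qed.

Lemma tens_row1V n (w : 'rV[K]_n) (l : 'rV[K]_1) :
  tens w l = castmx (erefl 1%N, esym (muln1 n)) (l 0 0 *: w).
Proof. by rewrite -tens1r castmx_comp castmx_id. Qed.

Lemma row1_mul (l : 'rV[K]_1) n (M : 'M[K]_(1, n)) : l *m M = l 0 0 *: M.
Proof. by apply/rowP => k; rewrite !mxE big_ord1. Qed.

Lemma row1_eq (l l' : 'rV[K]_1) : l 0 0 = l' 0 0 -> l = l'.
Proof. by move=> E; apply/rowP => k; rewrite (ord1 k). Qed.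

Lemma row1_scale (l : 'rV[K]_1) : l 0 0 *: (1%:M : 'rV[K]_1) = l.
Proof. by apply: row1_eq; rewrite !mxE mulr1. Qed.

Lemma tens_kron n n' m m' (A : 'M[K]_(n, n')) (B : 'M[K]_(m, m')) u v :
  tens (u *m A) (v *m B) = tens u v *m kron A B.
Proof. by rewrite /kron -/(tapp _ _) tapp_tens //; bilin_tac. Qed.

Lemma kron_mul n1 n2 n3 m1 m2 m3 (A : 'M[K]_(n1, n2)) (B : 'M[K]_(m1, m2))
  (C : 'M[K]_(n2, n3)) (D : 'M[K]_(m2, m3)) :
  kron A B *m kron C D = kron (A *m C) (B *m D).
Proof. by apply: mx_tens_eq => a b; rewrite mulmxA -!tens_kron !mulmxA. Qed.

Lemma kron1 n m : kron (1%:M : 'M[K]_n) (1%:M : 'M[K]_m) = 1%:M.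
Proof. by apply: mx_tens_eq => a b; rewrite -tens_kron !mulmx1. Qed.

Lemma kron_unit n m (A : 'M[K]_n) (B : 'M[K]_m) :
  A \in unitmx -> B \in unitmx ->
  kron A B \in unitmx /\ invmx (kron A B) = kron (invmx A) (invmx B).
Proof.
move=> uA uB.
have E : kron A B *m kron (invmx A) (invmx B) = 1%:M by rewrite kron_mul !mulmxV // kron1.
have [u _] := mulmx1_unit E; split => //.
by rewrite -[LHS]mulmx1 -E mulKmx.
Qed.

End TensorApplication.

Section IntPowers.
Variable K : fieldType.

Lemma int_ind_succ_pred (P : int -> Prop) : P 0 ->
  (forall k, P k -> P (k + 1)) -> (forall k, P k -> P (k - 1)) -> forall k, P k.
Proof.
move=> P0 PS PB; elim/int_rec => // n IH.
  by rewrite intS addrC; apply: PS.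
by rewrite intS opprD addrC; apply: PB.
Qed.

Lemma mxzpow0 n (A : 'M[K]_n) : mxzpow A 0 = 1%:M.
Proof. by []. Qed.

Lemma mxzpowS n (A : 'M[K]_n) k : A \in unitmx -> mxzpow A (k + 1) = mxzpow A k *m A.
Proof.
move=> uA; case: k => p.
  by rewrite (_ : Posz p + 1 = Posz p.+1) /=; [rewrite exprSr mulmxE | lia].
case: p => [|p].
  by rewrite (_ : Negz 0 + 1 = 0) /=; [rewrite expr1 mulVmx | lia].
rewrite (_ : Negz p.+1 + 1 = Negz p) /=; last lia.
by rewrite [in RHS]exprSr -mulmxE -mulmxA mulVmx // mulmx1.
Qed.

Lemma mxzpowB1 n (A : 'M[K]_n) k : A \in unitmx -> mxzpow A (k - 1) = mxzpow A k *m invmx A.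
Proof.
move=> uA; have := mxzpowS (k - 1) uA; rewrite (_ : k - 1 + 1 = k); last lia.
by move=> ->; rewrite mulmxK.
Qed.

Lemma mxzpowD n (A : 'M[K]_n) k l : A \in unitmx ->
  mxzpow A (k + l) = mxzpow A k *m mxzpow A l.
Proof.
move=> uA; elim/int_ind_succ_pred: l => [|l IH|l IH]; first by rewrite addr0 mxzpow0 mulmx1.
  by rewrite addrA !mxzpowS // IH mulmxA.
by rewrite addrA !mxzpowB1 // IH mulmxA.
Qed.

Lemma mxzpow1 n (A : 'M[K]_n) : mxzpow A 1 = A.
Proof. by rewrite /= expr1. Qed.

Lemma mxzpowV n (A : 'M[K]_n) k : A \in unitmx ->
  mxzpow A k *m mxzpow A (- k) = 1%:M.
Proof. by move=> uA; rewrite -mxzpowD // subrr. Qed.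

Lemma mxzpowVr n (A : 'M[K]_n) k : A \in unitmx ->
  mxzpow A (- k) *m mxzpow A k = 1%:M.
Proof. by move=> uA; rewrite -mxzpowD // addrC subrr. Qed.

Lemma mxzpow_intertw n m (A : 'M[K]_n) (B : 'M[K]_m) (M : 'M[K]_(n, m)) k :
  A \in unitmx -> B \in unitmx -> A *m M = M *m B ->
  mxzpow A k *m M = M *m mxzpow B k.
Proof.
move=> uA uB E.
have E' : invmx A *m M = M *m invmx B.
  by rewrite -[LHS]mulmx1 -(mulmxV uB) mulmxA -[X in X *m invmx B]mulmxA -E
    mulmxA mulVmx // mul1mx.
elim/int_ind_succ_pred: k => [|k IH|k IH]; first by rewrite !mxzpow0 mul1mx mulmx1.
  by rewrite !mxzpowS // -mulmxA E mulmxA IH mulmxA.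
by rewrite !mxzpowB1 // -mulmxA E' mulmxA IH mulmxA.
Qed.

Lemma mxzpow_id n k : mxzpow (1%:M : 'M[K]_n) k = 1%:M.
Proof. by case: k => p /=; rewrite ?invmx1 expr1n. Qed.

Lemma mxzpow_fixl n (A : 'M[K]_n) (v : 'rV[K]_n) k :
  A \in unitmx -> v *m A = v -> v *m mxzpow A k = v.
Proof.
move=> uA E; have := @mxzpow_intertw 1 n 1%:M A v k (unitmx1 _ _) uA.
by rewrite mul1mx mxzpow_id => /(_ (esym E)); rewrite mul1mx.
Qed.

Lemma mxzpow_fixr n (A : 'M[K]_n) (v : 'cV[K]_n) k :
  A \in unitmx -> A *m v = v -> mxzpow A k *m v = v.
Proof.
move=> uA E; have := @mxzpow_intertw n 1 A 1%:M v k uA (unitmx1 _ _).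
by rewrite mulmx1 mxzpow_id => /(_ E); rewrite mulmx1.
Qed.

Lemma mxzpow_comm n (A : 'M[K]_n) k : A \in unitmx -> mxzpow A k *m A = A *m mxzpow A k.
Proof. by move=> uA; apply: mxzpow_intertw. Qed.

Lemma mxzpow_kron n m (A : 'M[K]_n) (B : 'M[K]_m) k :
  A \in unitmx -> B \in unitmx -> mxzpow (kron A B) k = kron (mxzpow A k) (mxzpow B k).
Proof.
move=> uA uB; have [uAB iAB] := kron_unit uA uB.
elim/int_ind_succ_pred: k => [|k IH|k IH]; first by rewrite !mxzpow0 kron1.
  by rewrite !mxzpowS // IH kron_mul.
by rewrite !mxzpowB1 // IH iAB kron_mul.
Qed.

End IntPowers.

Section TrilinearTapp.
Variable K : fieldType.

Definition trilin {n m p q} (G : 'rV[K]_n -> 'rV[K]_m -> 'rV[K]_p -> 'rV[K]_q) :=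
  (forall b c, lin (fun a => G a b c)) /\ (forall a c, lin (fun b => G a b c)) /\
  (forall a b, lin (fun c => G a b c)).

Definition tapp3L {n m p q} (G : 'rV[K]_n -> 'rV[K]_m -> 'rV[K]_p -> 'rV[K]_q)
  (X : 'rV[K]_(n * (m * p))) := tapp (fun a z => tapp (fun d e => G a d e) z) X.
Definition tapp3R {n m p q} (G : 'rV[K]_n -> 'rV[K]_m -> 'rV[K]_p -> 'rV[K]_q)
  (Y : 'rV[K]_((n * m) * p)) := tapp (fun y e => tapp (fun a d => G a d e) y) Y.

Lemma tapp3_cast n m p q (G : 'rV[K]_n -> 'rV[K]_m -> 'rV[K]_p -> 'rV[K]_q) X :
  trilin G -> tapp3R G (castmx (erefl 1%N, mulnA n m p) X) = tapp3L G X.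
Proof.
move=> [G1 [G2 G3]]; move: X; apply: lin_tens_eq.
- apply: lin_comp; first exact: lin_mulmx_id.
  by apply: lin_castmx; exact: lin_id.
- exact: lin_mulmx_id.
move=> a z; rewrite /tapp3L tapp_tens; last by split=> ? ; lin_tac; auto.
move: z; apply: lin_tens_eq.
- apply: lin_comp; first exact: lin_mulmx_id.
  by apply: lin_castmx; apply: lin_tensr; exact: lin_id.
- by lin_tac.
move=> d e; rewrite tens_assoc /tapp3R tapp_tens; last by split=> ?; lin_tac; auto.
rewrite tapp_tens; last by split=> ?; lin_tac; auto.
by rewrite tapp_tens //; split=> ?; auto.
Qed.

Lemma tapp3_castE n m p q (G : 'rV[K]_n -> 'rV[K]_m -> 'rV[K]_p -> 'rV[K]_q) X Y :
  trilin G -> castmx (erefl 1%N, mulnA n m p) X = Y -> tapp3L G X = tapp3R G Y.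
Proof. by move=> TG <-; rewrite tapp3_cast. Qed.

Lemma tapp3R_id n m p (Y : 'rV[K]_((n * m) * p)) :
  tapp3R (fun a d e => tens (tens a d) e) Y = Y.
Proof.
move: Y; apply: lin_tens_eq; [exact: lin_mulmx_id | exact: lin_id |].
move=> y e; rewrite /tapp3R tapp_tens; last by bilin_tac.
move: y; apply: lin_tens_eq; [by lin_tac | by lin_tac |].
by move=> a d; rewrite tapp_tens //; bilin_tac.
Qed.

Lemma tapp3_castI n m p (X : 'rV[K]_(n * (m * p))) Y :
  tapp3L (fun a d e => tens (tens a d) e) X = Y ->
  castmx (erefl 1%N, mulnA n m p) X = Y.
Proof.
move=> <-; rewrite -[LHS]tapp3R_id tapp3_cast //.
by split; [|split] => *; lin_tac.
Qed.

End TrilinearTapp.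

Ltac trilin_tac := split; [|split]; intros; lin_tac.

Section HomBialgebraFacts.
Variables (K : fieldType) (h : nat) (H : HomBialg K h).
Hypothesis hH : is_HomBialgebra H.

Local Notation al := (hb_alpha H).
Local Notation P k := (mxzpow (hb_alpha H) k).
Local Notation Dl := (DeltaH H).
Local Notation mul := (mulH H).
Local Notation one := (hb_unit H).
Local Notation eps := (epsH H).

Lemma hb_alpha_unit : al \in unitmx. Proof. by case: hH. Qed.
Lemma hb_mulA a b c : mul (alH H a) (mul b c) = mul (mul a b) (alH H c).
Proof. by case: hH => _ [E _]; exact: E. Qed.
Lemma hb_alpha1 : one *m al = one. Proof. by case: hH => _ [_ [E _]]; exact: E. Qed.
Lemma hb_mul1r a : mul one a = a *m al. Proof. by case: hH => _ [_ [_ [E _]]]; exact: E. Qed.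
Lemma hb_mulr1 a : mul a one = a *m al. Proof. by case: hH => _ [_ [_ [_ [E _]]]]; exact: E. Qed.
Lemma hb_alpha_mul a b : mul a b *m al = mul (a *m al) (b *m al).
Proof. by case: hH => _ [_ [_ [_ [_ [E _]]]]]; exact: E. Qed.
Lemma hb_eps_alpha a : eps (a *m al) = eps a.
Proof. by case: hH => _ [_ [_ [_ [_ [_ [E _]]]]]]; exact: E. Qed.
Lemma hb_coassoc c : castmx (erefl 1%N, mulnA h h h)
                (tapp (fun c1 c2 => tens (alH H c1) (Dl c2)) (Dl c))
             = tapp (fun c1 c2 => tens (Dl c1) (alH H c2)) (Dl c).
Proof. by case: hH => _ [_ [_ [_ [_ [_ [_ [E _]]]]]]]; exact: E. Qed.
Lemma hb_counitl c : tapp (fun c1 c2 => eps c1 *: c2) (Dl c) = c *m al.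
Proof. by case: hH => _ [_ [_ [_ [_ [_ [_ [_ [E _]]]]]]]]; exact: E. Qed.
Lemma hb_counitr c : tapp (fun c1 c2 => eps c2 *: c1) (Dl c) = c *m al.
Proof. by case: hH => _ [_ [_ [_ [_ [_ [_ [_ [_ [E _]]]]]]]]]; exact: E. Qed.
Lemma hb_Delta_alpha c : Dl (c *m al) = Dl c *m kron al al.
Proof. by case: hH => _ [_ [_ [_ [_ [_ [_ [_ [_ [_ [E _]]]]]]]]]]; exact: E. Qed.
Lemma hb_Delta_mul a b : Dl (mul a b) = mulHH H (Dl a) (Dl b).
Proof. by case: hH => _ [_ [_ [_ [_ [_ [_ [_ [_ [_ [_ [E _]]]]]]]]]]]; exact: E. Qed.
Lemma hb_Delta1 : Dl one = tens one one.
Proof. by case: hH => _ [_ [_ [_ [_ [_ [_ [_ [_ [_ [_ [_ [E _]]]]]]]]]]]]; exact: E. Qed.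
Lemma hb_eps_mul a b : eps (mul a b) = eps a * eps b.
Proof. by case: hH => _ [_ [_ [_ [_ [_ [_ [_ [_ [_ [_ [_ [_ [E _]]]]]]]]]]]]]; exact: E. Qed.
Lemma hb_eps1 : eps one = 1.
Proof. by case: hH => _ [_ [_ [_ [_ [_ [_ [_ [_ [_ [_ [_ [_ [_ E]]]]]]]]]]]]]; exact: E. Qed.

Lemma hb_mulM : kron al al *m hb_mul H = hb_mul H *m al.
Proof.
apply: mx_tens_eq => a b; rewrite mulmxA -tens_kron.
by have := hb_alpha_mul a b; rewrite /mulH mulmxA => ->.
Qed.

Lemma hb_comulM : al *m hb_comul H = hb_comul H *m kron al al.
Proof.
apply/row_matrixP => k; rewrite !rowE !mulmxA.
by have := hb_Delta_alpha (delta_mx 0 k); rewrite /DeltaH.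
Qed.

Lemma hb_counitM : al *m hb_counit H = hb_counit H.
Proof.
apply/row_matrixP => k; rewrite !rowE mulmxA.
have := hb_eps_alpha (delta_mx 0 k); rewrite /epsH => E.
by apply/rowP => z; rewrite (ord1 z) E.
Qed.

Lemma mulH_mxzpow k a b : mul (a *m P k) (b *m P k) = mul a b *m P k.
Proof.
have [u _] := kron_unit hb_alpha_unit hb_alpha_unit.
rewrite /mulH tens_kron -mulmxA -mxzpow_kron ?hb_alpha_unit //.
by rewrite (mxzpow_intertw _ u hb_alpha_unit hb_mulM) mulmxA.
Qed.

Lemma DeltaH_mxzpow k a : Dl (a *m P k) = Dl a *m kron (P k) (P k).
Proof.
have [u _] := kron_unit hb_alpha_unit hb_alpha_unit.
rewrite /DeltaH -mulmxA (mxzpow_intertw _ hb_alpha_unit u hb_comulM) mxzpow_kron ?hb_alpha_unit //.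
by rewrite mulmxA.
Qed.

Lemma unitH_mxzpow k : one *m P k = one.
Proof. exact: (mxzpow_fixl _ hb_alpha_unit hb_alpha1). Qed.

Lemma epsH_mxzpow k a : eps (a *m P k) = eps a.
Proof. by rewrite /epsH -mulmxA (mxzpow_fixr _ hb_alpha_unit hb_counitM). Qed.

Lemma alphaH_mxzpowC k (a : 'rV[K]_h) : a *m P k *m al = a *m al *m P k.
Proof. by rewrite -!mulmxA mxzpow_comm ?hb_alpha_unit. Qed.

Lemma alphaH_mxzpowD k l (a : 'rV[K]_h) : a *m P k *m P l = a *m P (k + l).
Proof. by rewrite -mulmxA -mxzpowD ?hb_alpha_unit. Qed.

Lemma hb_coassoc_tapp c q (G : 'rV[K]_h -> 'rV[K]_h -> 'rV[K]_h -> 'rV[K]_q) : trilin G ->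
  tapp (fun c1 c2 => tapp (fun d e => G (c1 *m al) d e) (Dl c2)) (Dl c)
  = tapp (fun c1 c2 => tapp (fun a d => G a d (c2 *m al)) (Dl c1)) (Dl c).
Proof.
move=> TG; have := tapp3_castE TG (hb_coassoc c); rewrite /tapp3L /tapp3R.
case: TG => [G1 [G2 G3]].
rewrite !tapp_tapp => E; apply: (etrans _ (etrans E _));
  apply: eq_tapp => c1 c2; rewrite tapp_tens //; split=> ?; lin_tac; auto.
Qed.

End HomBialgebraFacts.

Section DimoduleLinear.
Variables (K : fieldType) (h : nat).

Lemma actDZl (U : LDimod K h) c (u : 'rV[K]_(ld_dim U)) a :
  @actD K h U (c *: u) a = c *: @actD K h U u a.
Proof. by rewrite /actD tensZl -scalemxAl. Qed.
Lemma actDZr (U : LDimod K h) c (u : 'rV[K]_(ld_dim U)) a :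
  @actD K h U u (c *: a) = c *: @actD K h U u a.
Proof. by rewrite /actD tensZr -scalemxAl. Qed.
Lemma coDZ (U : LDimod K h) c (u : 'rV[K]_(ld_dim U)) : @coD K h U (c *: u) = c *: @coD K h U u.
Proof. by rewrite /coD -scalemxAl. Qed.

End DimoduleLinear.

Section LongDimoduleFacts.
Variables (K : fieldType) (h : nat) (H : HomBialg K h).
Hypothesis hH : is_HomBialgebra H.
Variable U : LDimod K h.
Hypothesis hU : is_LongDimod H U.

Local Notation al := (hb_alpha H).
Local Notation P k := (mxzpow (hb_alpha H) k).
Local Notation aU := (ld_alpha U).
Local Notation Q k := (mxzpow (ld_alpha U) k).
Local Notation Dl := (DeltaH H).
Local Notation mul := (mulH H).
Local Notation one := (hb_unit H).
Local Notation eps := (epsH H).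
Local Notation act := (@actD K h U).
Local Notation co := (@coD K h U).

Lemma ld_alpha_unit : aU \in unitmx. Proof. by case: hU. Qed.
Lemma ld_actA u a b : act (act u a) (b *m al) = act (u *m aU) (mul a b).
Proof. by case: hU => _ [E _]; exact: E. Qed.
Lemma ld_act1 u : act u one = u *m aU.
Proof. by case: hU => _ [_ [E _]]; exact: E. Qed.
Lemma ld_coassoc u : castmx (erefl 1%N, mulnA (ld_dim U) h h)
                (tapp (fun u0 u1 => tens (alD u0) (DeltaH H u1)) (co u))
             = tapp (fun u0 u1 => tens (co u0) (alH H u1)) (co u).
Proof. by case: hU => _ [_ [_ [E _]]]; exact: E. Qed.
Lemma ld_counit u : tapp (fun u0 u1 => eps u1 *: u0) (co u) = u *m aU.
Proof. by case: hU => _ [_ [_ [_ [E _]]]]; exact: E. Qed.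
Lemma ld_alpha_act u a : act u a *m aU = act (u *m aU) (a *m al).
Proof. by case: hU => _ [_ [_ [_ [_ [E _]]]]]; exact: E. Qed.
Lemma ld_alpha_co u : co (u *m aU) = co u *m kron aU al.
Proof. by case: hU => _ [_ [_ [_ [_ [_ [E _]]]]]]; exact: E. Qed.
Lemma ld_long u a : co (act u a)
       = tapp (fun u0 u1 => tens (act u0 (a *m al)) (u1 *m al)) (co u).
Proof. by case: hU => _ [_ [_ [_ [_ [_ [_ E]]]]]]; exact: E. Qed.

Lemma ld_actM : kron aU al *m ld_act U = ld_act U *m aU.
Proof.
apply: mx_tens_eq => a b; rewrite mulmxA -tens_kron.
by have := ld_alpha_act a b; rewrite /actD mulmxA => ->.
Qed.

Lemma ld_coM : aU *m ld_coact U = ld_coact U *m kron aU al.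
Proof.
apply/row_matrixP => k; rewrite !rowE !mulmxA.
by have := ld_alpha_co (delta_mx 0 k); rewrite /coD.
Qed.

Lemma actD_mxzpow k u a : act (u *m Q k) (a *m P k) = act u a *m Q k.
Proof.
have [uk _] := kron_unit ld_alpha_unit (hb_alpha_unit hH).
rewrite /actD tens_kron -mulmxA -mxzpow_kron ?ld_alpha_unit ?(hb_alpha_unit hH) //.
by rewrite (mxzpow_intertw _ uk ld_alpha_unit ld_actM) mulmxA.
Qed.

Lemma coD_mxzpow k u : co (u *m Q k) = co u *m kron (Q k) (P k).
Proof.
have [uk _] := kron_unit ld_alpha_unit (hb_alpha_unit hH).
rewrite /coD -mulmxA (mxzpow_intertw _ ld_alpha_unit uk ld_coM)
  mxzpow_kron ?ld_alpha_unit ?(hb_alpha_unit hH) //.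
by rewrite mulmxA.
Qed.

Lemma ld_coassoc_tapp u q (G : 'rV[K]_(ld_dim U) -> 'rV[K]_h -> 'rV[K]_h -> 'rV[K]_q) : trilin G ->
  tapp (fun u0 u1 => tapp (fun d e => G (u0 *m aU) d e) (Dl u1)) (co u)
  = tapp (fun u0 u1 => tapp (fun a d => G a d (u1 *m al)) (co u0)) (co u).
Proof.
move=> TG; have := tapp3_castE TG (ld_coassoc u); rewrite /tapp3L /tapp3R.
case: TG => [G1 [G2 G3]].
rewrite !tapp_tapp => E; apply: (etrans _ (etrans E _));
  apply: eq_tapp => c1 c2; rewrite tapp_tens //; split=> ?; lin_tac; auto.
Qed.

End LongDimoduleFacts.

Section TensorFormulas.
Variables (K : fieldType) (h : nat) (H : HomBialg K h) (i j : int).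
Variables U V : LDimod K h.

Local Notation P k := (mxzpow (hb_alpha H) k).
Local Notation Dl := (DeltaH H).
Local Notation mul := (mulH H).
Local Notation T := (tensD H i j U V).

Lemma actD_tens u v a : @actD K h T (tens u v) a =
  tapp (fun a1 a2 => tens (@actD K h U u (a1 *m P (- i - 2)))
                          (@actD K h V v (a2 *m P (- j - 2)))) (Dl a).
Proof.
rewrite /actD /= -/(tapp _ _) tapp_tens; last by bilin_tac.
by rewrite tapp_tens //; bilin_tac.
Qed.

Lemma coD_tens u v : @coD K h T (tens u v) =
  tapp (fun u0 u1 => tapp (fun v0 v1 =>
     tens (tens u0 v0) (mul (u1 *m P i) (v1 *m P j))) (@coD K h V v)) (@coD K h U u).
Proof. by rewrite /coD /= -/(tapp _ _) tapp_tens //; bilin_tac. Qed.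

Lemma alD_tens u v : @alD K h T (tens u v) = tens (@alD K h U u) (@alD K h V v).
Proof. by rewrite /alD /= -tens_kron. Qed.

End TensorFormulas.

Ltac tapp_norm tac := repeat (first [ rewrite tapp_tapp | (rewrite tapp_tens; last by bilin_tac)
  | (rewrite tens_tappl; last by bilin_tac) | (rewrite tens_tappr; last by bilin_tac)
  | progress tac
  | progress (under eq_tapp => ? ? do tapp_norm tac)
  | progress (under [RHS]eq_tapp => ? ? do tapp_norm tac) ]).

Section TensorDimodule.
Variables (K : fieldType) (h : nat) (H : HomBialg K h) (i j : int).
Hypothesis hH : is_HomBialgebra H.
Variables U V : LDimod K h.
Hypothesis hU : is_LongDimod H U.
Hypothesis hV : is_LongDimod H V.

Local Notation al := (hb_alpha H).
Local Notation P k := (mxzpow (hb_alpha H) k).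
Local Notation Dl := (DeltaH H).
Local Notation mul := (mulH H).
Local Notation T := (tensD H i j U V).
Local Notation acT := (@actD K h T).
Local Notation cV := (@coD K h V).
Local Notation cT := (@coD K h T).

Lemma tensD_actA (x : 'rV[K]_(ld_dim T)) a b :
  acT (acT x a) (b *m al) = acT (x *m ld_alpha T) (mul a b).
Proof.
move: x; apply: lin_tens_eq; [by lin_tac | by lin_tac |] => u v.
rewrite actD_tens -/(alD _) alD_tens actD_tens /alD.
rewrite (tapp_push (Phi := fun y => acT y (b *m al))); [|by lin_tac|by bilin_tac].
under eq_tapp => a1 a2 do rewrite actD_tens hb_Delta_alpha // tapp_kron tapp_tapp.
under eq_tapp => a1 a2 do under eq_tapp => b1 b2 do (rewrite tapp_tens; last by bilin_tac).
rewrite hb_Delta_mul // /mulHH tapp_tapp.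
under [RHS]eq_tapp => a1 a2 do rewrite tapp_tapp.
apply: eq_tapp => a1 a2; apply: eq_tapp => b1 b2; rewrite tapp_tens; last by bilin_tac.
by rewrite -!(alphaH_mxzpowC hH) (ld_actA hU) (ld_actA hV) !(mulH_mxzpow hH).
Qed.

Lemma tensD_act1 (x : 'rV[K]_(ld_dim T)) : acT x (hb_unit H) = x *m ld_alpha T.
Proof.
move: x; apply: lin_tens_eq; [by lin_tac | by lin_tac |] => u v.
rewrite actD_tens (hb_Delta1 hH) tapp_tens; last by bilin_tac.
by rewrite !(unitH_mxzpow hH) (ld_act1 hU) (ld_act1 hV) -tens_kron.
Qed.

Lemma tensD_alpha_act (x : 'rV[K]_(ld_dim T)) a :
  acT x a *m ld_alpha T = acT (x *m ld_alpha T) (a *m al).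
Proof.
move: x; apply: lin_tens_eq; [by lin_tac | by lin_tac |] => u v.
rewrite actD_tens -tens_kron actD_tens (hb_Delta_alpha hH) tapp_kron tapp_tapp tapp_mulmx.
apply: eq_tapp => a1 a2; rewrite tapp_tens; last by bilin_tac.
by rewrite -tens_kron (ld_alpha_act hU) (ld_alpha_act hV) !(alphaH_mxzpowC hH).
Qed.

Lemma tensD_alpha_co (x : 'rV[K]_(ld_dim T)) :
  cT (x *m ld_alpha T) = cT x *m kron (ld_alpha T) al.
Proof.
move: x; apply: lin_tens_eq; [by lin_tac | by lin_tac |] => u v.
rewrite -tens_kron !coD_tens (ld_alpha_co hU) tapp_kron tapp_tapp tapp_mulmx.
apply: eq_tapp => u0 u1; rewrite tapp_tens; last by bilin_tac.
rewrite (ld_alpha_co hV) tapp_kron tapp_tapp tapp_mulmx.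
apply: eq_tapp => v0 v1; rewrite tapp_tens; last by bilin_tac.
rewrite -tens_kron -tens_kron; congr tens.
by rewrite -!(alphaH_mxzpowC hH) (hb_alpha_mul hH).
Qed.

Lemma tensD_counit (x : 'rV[K]_(ld_dim T)) :
  tapp (fun w0 w1 => epsH H w1 *: w0) (cT x) = x *m ld_alpha T.
Proof.
move: x; apply: lin_tens_eq; [by lin_tac | by lin_tac |] => u v.
rewrite -tens_kron -(ld_counit hU u) -(ld_counit hV v) tens_tappl; last by bilin_tac.
rewrite coD_tens tapp_tapp; apply: eq_tapp => u0 u1.
rewrite tens_tappr; last by bilin_tac.
rewrite tapp_tapp; apply: eq_tapp => v0 v1; rewrite tapp_tens; last by bilin_tac.
by rewrite (hb_eps_mul hH) !(epsH_mxzpow hH) tensZl tensZr scalerA mulrC.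
Qed.

Lemma tensD_long (x : 'rV[K]_(ld_dim T)) a :
  cT (acT x a) = tapp (fun w0 w1 => tens (acT w0 (a *m al)) (w1 *m al)) (cT x).
Proof.
move: x; apply: lin_tens_eq; [by lin_tac | by lin_tac |] => u v.
rewrite actD_tens (tapp_push (Phi := cT)); [|by lin_tac|by bilin_tac].
under eq_tapp => a1 a2 do rewrite coD_tens (ld_long hU) tapp_tapp.
under eq_tapp => a1 a2 do under eq_tapp => u0 u1 do
  (rewrite tapp_tens; last by bilin_tac).
under eq_tapp => a1 a2 do under eq_tapp => u0 u1 do rewrite (ld_long hV) tapp_tapp.
under eq_tapp => a1 a2 do under eq_tapp => u0 u1 do under eq_tapp => v0 v1 do
  (rewrite tapp_tens; last by bilin_tac).
rewrite coD_tens tapp_tapp.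
under [RHS]eq_tapp => u0 u1 do (rewrite tapp_tapp).
under [RHS]eq_tapp => u0 u1 do under eq_tapp => v0 v1 do
  (rewrite tapp_tens; last by bilin_tac).
under [RHS]eq_tapp => u0 u1 do under eq_tapp => v0 v1 do
  (rewrite actD_tens (hb_Delta_alpha hH) tapp_kron tapp_tapp tens_tappl; last by bilin_tac).
under [RHS]eq_tapp => u0 u1 do (rewrite exchange_tapp; [|by intros; lin_tac..]).
rewrite exchange_tapp; [|by intros; lin_tac..].
apply: eq_tapp => a1 a2; apply: eq_tapp => u0 u1; apply: eq_tapp => v0 v1.
rewrite tapp_tens; last by bilin_tac.
by rewrite -!(alphaH_mxzpowC hH) (hb_alpha_mul hH).
Qed.

Lemma tensD_coassoc (x : 'rV[K]_(ld_dim T)) :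
  castmx (erefl 1%N, mulnA (ld_dim T) h h)
    (tapp (fun w0 w1 => tens (@alD K h T w0) (Dl w1)) (cT x))
  = tapp (fun w0 w1 => tens (cT w0) (alH H w1)) (cT x).
Proof.
apply: tapp3_castI; rewrite -[RHS]tapp3R_id /tapp3L /tapp3R.
move: x; apply: lin_tens_eq; [by lin_tac|by lin_tac|] => u v.
rewrite coD_tens !tapp_tapp.
tapp_norm ltac:(rewrite /alD -?tens_kron ?(hb_Delta_mul hH) /mulHH ?(DeltaH_mxzpow hH) ?tapp_kron).
under eq_tapp => u0 u1 do (rewrite exchange_tapp; [|by intros; lin_tac..]).
rewrite (@ld_coassoc_tapp _ _ _ _ hU _ _ (fun a c d => tapp (fun v0 v1 => tapp (fun r s =>
   tens (tens (tens a (v0 *m ld_alpha V)) (mul (c *m P i) (r *m P j))) (mul (d *m P i) (s *m P j)))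
   (Dl v1)) (cV v))); last by trilin_tac.
under eq_tapp => u0 u1 do under eq_tapp => a d do
  (rewrite (@ld_coassoc_tapp _ _ _ _ hV _ _ (fun b r s =>
    tens (tens (tens a b) (mul (d *m P i) (r *m P j))) (mul (u1 *m al *m P i) (s *m P j))));
   last by trilin_tac).
under eq_tapp => u0 u1 do (rewrite exchange_tapp; [|by intros; lin_tac..]).
apply: eq_tapp => u0 u1; apply: eq_tapp => v0 v1; apply: eq_tapp => a d.
apply: eq_tapp => b r.
by rewrite /alH -!(alphaH_mxzpowC hH) (hb_alpha_mul hH).
Qed.

Lemma tensD_LongDimod : is_LongDimod H T.
Proof.
split; first exact: (kron_unit (ld_alpha_unit hU) (ld_alpha_unit hV)).1.
split; first exact: tensD_actA.
split; first exact: tensD_act1.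
split; first exact: tensD_coassoc.
split; first exact: tensD_counit.
split; first exact: tensD_alpha_act.
split; first exact: tensD_alpha_co.
exact: tensD_long.
Qed.

End TensorDimodule.

Section UnitDimodule.
Variables (K : fieldType) (h : nat) (H : HomBialg K h).
Hypothesis hH : is_HomBialgebra H.
Local Notation one := (hb_unit H).
Local Notation eps := (epsH H).
Local Notation I := (unitD H).

Lemma actD_unitD l a : @actD K h I l a = eps a *: l.
Proof.
rewrite /actD /= mulmx_castl esymK tens1l; apply: row1_eq.
by rewrite -scalemxAl [LHS]mxE [RHS]mxE mulrC.
Qed.

Lemma coD_unitD l : @coD K h I l = tens l one.
Proof. by rewrite /coD /= -castmx_mulr row1_mul tens1lV. Qed.

Lemma unitD_LongDimod : is_LongDimod H I.
Proof.
rewrite /is_LongDimod /alD /alH /=.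
split; first exact: unitmx1.
split=> [u a b|]; first by rewrite !actD_unitD mulmx1 scalerA (hb_eps_mul hH) (hb_eps_alpha hH) mulrC.
split=> [u|]; first by rewrite actD_unitD (hb_eps1 hH) scale1r mulmx1.
split=> [u|].
  rewrite coD_unitD !tapp_tens; [|by bilin_tac|by bilin_tac].
  by rewrite (hb_alpha1 hH) (hb_Delta1 hH) coD_unitD mulmx1 tens_assoc.
split=> [u|]; first by rewrite coD_unitD tapp_tens ?(hb_eps1 hH) ?scale1r ?mulmx1 //; bilin_tac.
split=> [u a|]; first by rewrite !mulmx1 !actD_unitD (hb_eps_alpha hH).
split=> [u|]; first by rewrite mulmx1 !coD_unitD -tens_kron mulmx1 (hb_alpha1 hH).
move=> u a; rewrite actD_unitD !coD_unitD tapp_tens; last by bilin_tac.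
by rewrite actD_unitD (hb_eps_alpha hH) (hb_alpha1 hH) tensZl.
Qed.

End UnitDimodule.

Section Morphisms.
Variables (K : fieldType) (h : nat) (H : HomBialg K h) (i j : int).

Section MorphismAxioms.
Variables (U V : LDimod K h) (f : 'M[K]_(ld_dim U, ld_dim V)).
Hypothesis hf : @is_LDmorph K h U V f.
Lemma LDmorph_act u a : @actD K h U u a *m f = @actD K h V (u *m f) a.
Proof. by case: hf => E _; exact: E. Qed.
Lemma LDmorph_co u : @coD K h V (u *m f) = @coD K h U u *m kron f 1%:M.
Proof. by case: hf => _ [E _]; exact: E. Qed.
Lemma LDmorph_alpha : ld_alpha U *m f = f *m ld_alpha V.
Proof. by case: hf => _ [_ E]. Qed.
End MorphismAxioms.

Lemma LDmorph_inv (U V : LDimod K h) (f : 'M[K]_(ld_dim U, ld_dim V)) g :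
  @is_LDmorph K h U V f -> f *m g = 1%:M -> g *m f = 1%:M -> @is_LDmorph K h V U g.
Proof.
move=> hf fg gf; split=> [u a|].
  by rewrite -[RHS]mulmx1 -fg mulmxA (LDmorph_act hf) -[u *m g *m f]mulmxA gf mulmx1.
split=> [u|].
  rewrite -{2}[u](_ : u *m g *m f = u); last by rewrite -mulmxA gf mulmx1.
  by rewrite (LDmorph_co hf) -mulmxA kron_mul fg mulmx1 kron1 mulmx1.
transitivity (g *m (f *m ld_alpha V) *m g); first by rewrite mulmxA gf mul1mx.
by rewrite -(LDmorph_alpha hf) !mulmxA -[g *m ld_alpha U *m f *m g]mulmxA fg mulmx1.
Qed.

Lemma kron_LDmorph (U U' V V' : LDimod K h) (f : 'M[K]_(ld_dim U, ld_dim U'))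
  (g : 'M[K]_(ld_dim V, ld_dim V')) :
  @is_LDmorph K h U U' f -> @is_LDmorph K h V V' g ->
  @is_LDmorph K h (tensD H i j U V) (tensD H i j U' V') (kron f g).
Proof.
move=> hf hg; split=> [x a|].
  move: x; apply: lin_tens_eq; [by lin_tac|by lin_tac|] => u v.
  rewrite actD_tens -tens_kron actD_tens tapp_mulmx; apply: eq_tapp => a1 a2.
  by rewrite -tens_kron (LDmorph_act hf) (LDmorph_act hg).
split=> [x|].
  move: x; apply: lin_tens_eq; [by lin_tac|by lin_tac|] => u v.
  rewrite -tens_kron !coD_tens (LDmorph_co hf) tapp_kron tapp_tapp tapp_mulmx.
  apply: eq_tapp => u0 u1; rewrite tapp_tens; last by bilin_tac.
  rewrite (LDmorph_co hg) tapp_kron tapp_tapp tapp_mulmx.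
  apply: eq_tapp => v0 v1; rewrite tapp_tens; last by bilin_tac.
  by rewrite -!tens_kron !mulmx1.
by rewrite /= !kron_mul (LDmorph_alpha hf) (LDmorph_alpha hg).
Qed.

End Morphisms.

Section Associator.
Variables (K : fieldType) (h : nat) (H : HomBialg K h) (i j : int).
Hypothesis hH : is_HomBialgebra H.

Local Notation al := (hb_alpha H).
Local Notation P k := (mxzpow (hb_alpha H) k).
Local Notation mul := (mulH H).
Local Notation z U k := (mxzpow (ld_alpha U) k).

Lemma assocD_tens (U V W : LDimod K h) u v w :
  tens (tens u v) w *m assocD i j U V W = tens (u *m z U (i + 1)) (tens v (w *m z W (- j - 1))).
Proof. by rewrite /assocD -castmx_mulr -!tens_kron mulmx1 tens_assocV. Qed.

Definition assocD_inv (U V W : LDimod K h) :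
  'M[K]_(ld_dim U * (ld_dim V * ld_dim W), (ld_dim U * ld_dim V) * ld_dim W) :=
  castmx (esym (mulnA _ _ _), erefl)
    (kron (kron (z U (- (i + 1))) 1%:M) (z W (- (- j - 1)))).

Lemma assocD_inv_tens (U V W : LDimod K h) u v w :
  tens u (tens v w) *m assocD_inv U V W = tens (tens (u *m z U (- (i + 1))) v) (w *m z W (- (- j - 1))).
Proof. by rewrite /assocD_inv mulmx_castl esymK tens_assoc -!tens_kron mulmx1. Qed.

Lemma lunitD_tens (U : LDimod K h) (l : 'rV[K]_1) u :
  tens l u *m lunitD j U = l 0 0 *: (u *m z U (j + 1)).
Proof. by rewrite /lunitD -castmx_mulr -tens_kron mulmx1 tens1l. Qed.

Lemma runitD_tens (U : LDimod K h) u (l : 'rV[K]_1) :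
  tens u l *m runitD i U = l 0 0 *: (u *m z U (i + 1)).
Proof. by rewrite /runitD -castmx_mulr -tens_kron mulmx1 tens1r. Qed.

Lemma alphaH_mxzpow1 (a : 'rV[K]_h) : a *m al = a *m P 1.
Proof. by rewrite mxzpow1. Qed.

Lemma mulH_mxzpow_assoc (u1 v1 w1 : 'rV[K]_h) :
  mul (u1 *m P (i + 1) *m P i) (mul (v1 *m P i) (w1 *m P (- j - 1) *m P j) *m P j)
  = mul (mul (u1 *m P i) (v1 *m P j) *m P i) (w1 *m P j).
Proof.
rewrite !(alphaH_mxzpowD hH) -!(mulH_mxzpow hH) !(alphaH_mxzpowD hH).
have E := hb_mulA hH (u1 *m P (i + i)) (v1 *m P (j + i)) (w1 *m P (j - 1)).
rewrite /alH !alphaH_mxzpow1 !(alphaH_mxzpowD hH) in E.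
apply: (etrans _ (etrans E _)).
  by congr (mul (_ *m P _) (mul (_ *m P _) (_ *m P _))); lia.
by congr (mul (mul (_ *m P _) (_ *m P _)) (_ *m P _)); lia.
Qed.

Section AssociatorIso.
Variables U V W : LDimod K h.
Hypotheses (hU : is_LongDimod H U) (hV : is_LongDimod H V) (hW : is_LongDimod H W).
Local Notation T1 := (tensD H i j (tensD H i j U V) W).
Local Notation T2 := (tensD H i j U (tensD H i j V W)).

Lemma assocD_act (x : 'rV[K]_(ld_dim T1)) a :
  @actD K h T1 x a *m assocD i j U V W = @actD K h T2 (x *m assocD i j U V W) a.
Proof.
move: x; apply: lin_tens3_eq; [by lin_tac|by lin_tac|] => u v w.
rewrite assocD_tens actD_tens.
tapp_norm ltac:(rewrite ?actD_tens ?tapp_mulmx ?assocD_tens ?(DeltaH_mxzpow hH) ?tapp_kron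
  -?(actD_mxzpow hH hU) -?(actD_mxzpow hH hW)).
(* Both sides act by the same iterated coproduct of [a], bracketed differently;
   [hb_coassoc_tapp] rebrackets it, leaving only exponents of alpha_H to compare. *)
symmetry; apply: (etrans _ (etrans (hb_coassoc_tapp hH a (G := fun x y t =>
  tens (actD (u *m z U (i + 1)) (x *m P (- i - 3)))
    (tens (actD v (y *m P (- i - j - 4))) (actD (w *m z W (- j - 1)) (t *m P (- 2 * j - 4))))) _) _));
  [ apply: eq_tapp => c1 c2; apply: eq_tapp => d e
  | by trilin_tac
  | apply: eq_tapp => c1 c2; apply: eq_tapp => d e ];
  rewrite ?alphaH_mxzpow1 ?(alphaH_mxzpowD hH);
  congr (tens (actD _ (_ *m P _)) (tens (actD _ (_ *m P _)) (actD _ (_ *m P _)))); lia.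
Qed.

Lemma assocD_co (x : 'rV[K]_(ld_dim T1)) :
  @coD K h T2 (x *m assocD i j U V W) = @coD K h T1 x *m kron (assocD i j U V W) 1%:M.
Proof.
move: x; apply: lin_tens3_eq; [by lin_tac|by lin_tac|] => u v w.
rewrite assocD_tens !coD_tens.
tapp_norm ltac:(rewrite ?coD_tens ?(coD_mxzpow hH hU) ?(coD_mxzpow hH hW) ?tapp_kron ?tapp_mulmx
  -?tens_kron ?assocD_tens ?mulmx1).
apply: eq_tapp => u0 u1; apply: eq_tapp => v0 v1; apply: eq_tapp => w0 w1.
by rewrite mulH_mxzpow_assoc.
Qed.

Lemma assocD_alpha : ld_alpha T1 *m assocD i j U V W = assocD i j U V W *m ld_alpha T2.
Proof.
apply: mx_tens_eq3 => u v w; rewrite /= !mulmxA -!tens_kron !assocD_tens -!tens_kron.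
by rewrite -!mulmxA !mxzpow_comm ?(ld_alpha_unit hU) ?(ld_alpha_unit hW).
Qed.

Lemma assocD_LDmorph : @is_LDmorph K h T1 T2 (assocD i j U V W).
Proof. split; [exact: assocD_act | split; [exact: assocD_co | exact: assocD_alpha]]. Qed.

Lemma assocD_mul_inv : assocD i j U V W *m assocD_inv U V W = 1%:M.
Proof.
apply: mx_tens_eq3 => u v w; rewrite mulmxA assocD_tens assocD_inv_tens mulmx1.
by rewrite -!mulmxA !mxzpowV ?(ld_alpha_unit hU) ?(ld_alpha_unit hW) ?mulmx1.
Qed.

Lemma assocD_inv_mul : assocD_inv U V W *m assocD i j U V W = 1%:M.
Proof.
apply: mx_tens_eq3r => u v w; rewrite mulmxA assocD_inv_tens assocD_tens mulmx1.
by rewrite -!mulmxA !mxzpowVr ?(ld_alpha_unit hU) ?(ld_alpha_unit hW) ?mulmx1.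
Qed.

Lemma assocD_iso : @is_LDiso K h T1 T2 (assocD i j U V W).
Proof.
split; first exact: assocD_LDmorph.
exists (assocD_inv U V W); split; last by split; [exact: assocD_mul_inv | exact: assocD_inv_mul].
exact: (LDmorph_inv assocD_LDmorph assocD_mul_inv assocD_inv_mul).
Qed.

End AssociatorIso.
End Associator.

Section Unitors.
Variables (K : fieldType) (h : nat) (H : HomBialg K h) (i j : int).
Hypothesis hH : is_HomBialgebra H.

Local Notation P k := (mxzpow (hb_alpha H) k).
Local Notation Dl := (DeltaH H).
Local Notation eps := (epsH H).
Local Notation z U k := (mxzpow (ld_alpha U) k).
Local Notation I := (unitD H).

Section LeftUnitor.
Variable U : LDimod K h.
Hypothesis hU : is_LongDimod H U.
Local Notation T := (tensD H i j I U).

Definition lunitD_inv : 'M[K]_(ld_dim U, 1 * ld_dim U) :=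
  castmx (erefl _, esym (mul1n _)) (z U (- (j + 1))).

Lemma lunitD_inv_tens u : u *m lunitD_inv = tens (1%:M : 'rV[K]_1) (u *m z U (- (j + 1))).
Proof. by rewrite /lunitD_inv -castmx_mulr tens1_rowV. Qed.

Lemma lunitD_act (x : 'rV[K]_(ld_dim T)) a :
  @actD K h T x a *m lunitD j U = @actD K h U (x *m lunitD j U) a.
Proof.
move: x; apply: lin_tens_eq; [by lin_tac|by lin_tac|] => l u.
rewrite actD_tens tapp_mulmx lunitD_tens actDZl.
transitivity (tapp (fun a1 a2 =>
  l 0 0 *: @actD K h U (u *m z U (j + 1)) ((eps a1 *: a2) *m P (- 1))) (Dl a)).
  apply: eq_tapp => a1 a2.
  rewrite actD_unitD tensZl -!scalemxAl lunitD_tens -(actD_mxzpow hH hU)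
    (alphaH_mxzpowD hH) (epsH_mxzpow hH) actDZr !scalerA mulrC.
  by rewrite (_ : - j - 2 + (j + 1) = - 1) //; lia.
rewrite -(tapp_push (Phi := fun c => l 0 0 *: @actD K h U (u *m z U (j + 1)) (c *m P (- 1))));
  [|by lin_tac|by bilin_tac].
by rewrite (hb_counitl hH) alphaH_mxzpow1 (alphaH_mxzpowD hH) (_ : 1 + - 1 = 0) ?mulmx1 //; lia.
Qed.

Lemma lunitD_co (x : 'rV[K]_(ld_dim T)) :
  @coD K h U (x *m lunitD j U) = @coD K h T x *m kron (lunitD j U) 1%:M.
Proof.
move: x; apply: lin_tens_eq; [by lin_tac|by lin_tac|] => l u.
rewrite lunitD_tens coDZ (coD_mxzpow hH hU) tapp_kron coD_tens coD_unitD tapp_tens; last by bilin_tac.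
rewrite (tapp_push (Phi := fun y => l 0 0 *: y)); [|by lin_tac|by bilin_tac].
rewrite tapp_mulmx; apply: eq_tapp => u0 u1.
by rewrite (unitH_mxzpow hH) (hb_mul1r hH) -tens_kron lunitD_tens mulmx1 tensZl
  alphaH_mxzpow1 (alphaH_mxzpowD hH) addrC.
Qed.

Lemma lunitD_alpha : ld_alpha T *m lunitD j U = lunitD j U *m ld_alpha U.
Proof.
apply: mx_tens_eq => l u; rewrite /= !mulmxA -tens_kron mulmx1 !lunitD_tens.
by rewrite -scalemxAl -!mulmxA mxzpow_comm ?(ld_alpha_unit hU).
Qed.

Lemma lunitD_mul_inv : lunitD j U *m lunitD_inv = 1%:M.
Proof.
apply: mx_tens_eq => l u; rewrite mulmxA lunitD_tens -scalemxAl lunitD_inv_tens mulmx1.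
by rewrite -mulmxA mxzpowV ?(ld_alpha_unit hU) // mulmx1 -tensZl row1_scale.
Qed.

Lemma lunitD_inv_mul : lunitD_inv *m lunitD j U = 1%:M.
Proof.
apply: mx_row_eq => u; rewrite mulmxA lunitD_inv_tens lunitD_tens mulmx1 mxE scale1r.
by rewrite -mulmxA mxzpowVr ?(ld_alpha_unit hU) // mulmx1.
Qed.

Lemma lunitD_iso : @is_LDiso K h T U (lunitD j U).
Proof.
have m : @is_LDmorph K h T U (lunitD j U).
  by split; [exact: lunitD_act | split; [exact: lunitD_co | exact: lunitD_alpha]].
split => //; exists lunitD_inv; split; last by split; [exact: lunitD_mul_inv | exact: lunitD_inv_mul].
exact: (LDmorph_inv m lunitD_mul_inv lunitD_inv_mul).
Qed.

End LeftUnitor.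
Section RightUnitor.
Variable U : LDimod K h.
Hypothesis hU : is_LongDimod H U.
Local Notation T := (tensD H i j U I).

Definition runitD_inv : 'M[K]_(ld_dim U, ld_dim U * 1) :=
  castmx (erefl _, esym (muln1 _)) (z U (- (i + 1))).

Lemma runitD_inv_tens u : u *m runitD_inv = tens (u *m z U (- (i + 1))) (1%:M : 'rV[K]_1).
Proof. by rewrite /runitD_inv -castmx_mulr tens_row1V mxE scale1r. Qed.

Lemma runitD_act (x : 'rV[K]_(ld_dim T)) a :
  @actD K h T x a *m runitD i U = @actD K h U (x *m runitD i U) a.
Proof.
move: x; apply: lin_tens_eq; [by lin_tac|by lin_tac|] => u l.
rewrite actD_tens tapp_mulmx runitD_tens actDZl.
transitivity (tapp (fun a1 a2 =>
  l 0 0 *: @actD K h U (u *m z U (i + 1)) ((eps a2 *: a1) *m P (- 1))) (Dl a)).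
  apply: eq_tapp => a1 a2.
  rewrite actD_unitD tensZr -!scalemxAl runitD_tens -(actD_mxzpow hH hU)
    (alphaH_mxzpowD hH) (epsH_mxzpow hH) actDZr !scalerA mulrC.
  by rewrite (_ : - i - 2 + (i + 1) = - 1) //; lia.
rewrite -(tapp_push (Phi := fun c => l 0 0 *: @actD K h U (u *m z U (i + 1)) (c *m P (- 1))));
  [|by lin_tac|by bilin_tac].
by rewrite (hb_counitr hH) alphaH_mxzpow1 (alphaH_mxzpowD hH) (_ : 1 + - 1 = 0) ?mulmx1 //; lia.
Qed.

Lemma runitD_co (x : 'rV[K]_(ld_dim T)) :
  @coD K h U (x *m runitD i U) = @coD K h T x *m kron (runitD i U) 1%:M.
Proof.
move: x; apply: lin_tens_eq; [by lin_tac|by lin_tac|] => u l.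
rewrite runitD_tens coDZ (coD_mxzpow hH hU) tapp_kron coD_tens.
rewrite (tapp_push (Phi := fun y => l 0 0 *: y)); [|by lin_tac|by bilin_tac].
rewrite tapp_mulmx; apply: eq_tapp => u0 u1.
rewrite coD_unitD tapp_tens; last by bilin_tac.
by rewrite (unitH_mxzpow hH) (hb_mulr1 hH) -tens_kron runitD_tens mulmx1 tensZl
  alphaH_mxzpow1 (alphaH_mxzpowD hH) addrC.
Qed.

Lemma runitD_alpha : ld_alpha T *m runitD i U = runitD i U *m ld_alpha U.
Proof.
apply: mx_tens_eq => u l; rewrite /= !mulmxA -tens_kron mulmx1 !runitD_tens.
by rewrite -scalemxAl -!mulmxA mxzpow_comm ?(ld_alpha_unit hU).
Qed.

Lemma runitD_mul_inv : runitD i U *m runitD_inv = 1%:M.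
Proof.
apply: mx_tens_eq => u l; rewrite mulmxA runitD_tens -scalemxAl runitD_inv_tens mulmx1.
by rewrite -mulmxA mxzpowV ?(ld_alpha_unit hU) // mulmx1 -tensZr row1_scale.
Qed.

Lemma runitD_inv_mul : runitD_inv *m runitD i U = 1%:M.
Proof.
apply: mx_row_eq => u; rewrite mulmxA runitD_inv_tens runitD_tens mulmx1 mxE scale1r.
by rewrite -mulmxA mxzpowVr ?(ld_alpha_unit hU) // mulmx1.
Qed.

Lemma runitD_iso : @is_LDiso K h T U (runitD i U).
Proof.
have m : @is_LDmorph K h T U (runitD i U).
  by split; [exact: runitD_act | split; [exact: runitD_co | exact: runitD_alpha]].
split => //; exists runitD_inv; split; last by split; [exact: runitD_mul_inv | exact: runitD_inv_mul].
exact: (LDmorph_inv m runitD_mul_inv runitD_inv_mul).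
Qed.

End RightUnitor.
End Unitors.

Section Coherence.
Variables (K : fieldType) (h : nat) (H : HomBialg K h) (i j : int).
Local Notation I := (unitD H).

Lemma assocD_natural (U U' V V' W W' : LDimod K h) f g k :
  is_LongDimod H U -> is_LongDimod H U' -> is_LongDimod H W -> is_LongDimod H W' ->
  @is_LDmorph K h U U' f -> @is_LDmorph K h V V' g -> @is_LDmorph K h W W' k ->
  kron (kron f g) k *m assocD i j U' V' W' = assocD i j U V W *m kron f (kron g k).
Proof.
move=> hU hU' hW hW' hf hg hk; apply: mx_tens_eq3 => u v w.
rewrite !mulmxA -!tens_kron !assocD_tens -!tens_kron -!mulmxA.
rewrite (mxzpow_intertw _ (ld_alpha_unit hU) (ld_alpha_unit hU') (LDmorph_alpha hf)).
by rewrite (mxzpow_intertw _ (ld_alpha_unit hW) (ld_alpha_unit hW') (LDmorph_alpha hk)).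
Qed.

Lemma lunitD_natural (U U' : LDimod K h) f :
  is_LongDimod H U -> is_LongDimod H U' -> @is_LDmorph K h U U' f ->
  kron (1%:M : 'M[K]_1) f *m lunitD j U' = lunitD j U *m f.
Proof.
move=> hU hU' hf; apply: mx_tens_eq => l u.
rewrite !mulmxA -tens_kron mulmx1 !lunitD_tens -scalemxAl -!mulmxA.
by rewrite (mxzpow_intertw _ (ld_alpha_unit hU) (ld_alpha_unit hU') (LDmorph_alpha hf)).
Qed.

Lemma runitD_natural (U U' : LDimod K h) f :
  is_LongDimod H U -> is_LongDimod H U' -> @is_LDmorph K h U U' f ->
  kron f (1%:M : 'M[K]_1) *m runitD i U' = runitD i U *m f.
Proof.
move=> hU hU' hf; apply: mx_tens_eq => u l.
rewrite !mulmxA -tens_kron mulmx1 !runitD_tens -scalemxAl -!mulmxA.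
by rewrite (mxzpow_intertw _ (ld_alpha_unit hU) (ld_alpha_unit hU') (LDmorph_alpha hf)).
Qed.


Lemma assocD_pentagon (U V W X : LDimod K h) :
  is_LongDimod H U -> is_LongDimod H V -> is_LongDimod H W -> is_LongDimod H X ->
  assocD i j (tensD H i j U V) W X *m assocD i j U V (tensD H i j W X)
  = kron (assocD i j U V W) (1%:M : 'M[K]_(ld_dim X)) *m assocD i j U (tensD H i j V W) X
    *m kron (1%:M : 'M[K]_(ld_dim U)) (assocD i j V W X).
Proof.
move=> hU hV hW hX; apply: mx_tens_eq4 => u v w x.
rewrite !mulmxA.
rewrite [in LHS](@assocD_tens _ _ i j (tensD H i j U V) W X)
  (mxzpow_kron _ (ld_alpha_unit hU) (ld_alpha_unit hV)).
rewrite -[in LHS]tens_kron.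
rewrite [in LHS](@assocD_tens _ _ i j U V (tensD H i j W X))
  (mxzpow_kron _ (ld_alpha_unit hW) (ld_alpha_unit hX)).
rewrite -[in LHS]tens_kron.
rewrite -[in RHS]tens_kron mulmx1 (@assocD_tens _ _ i j U V W)
  (@assocD_tens _ _ i j U (tensD H i j V W) X).
rewrite -tens_kron mulmx1 (@assocD_tens _ _ i j V W X).
by rewrite -!mulmxA -!mxzpowD ?(ld_alpha_unit hU) ?(ld_alpha_unit hX).
Qed.

Lemma assocD_triangle (U V : LDimod K h) :
  is_LongDimod H U -> is_LongDimod H V ->
  assocD i j U I V *m kron (1%:M : 'M[K]_(ld_dim U)) (lunitD j V)
  = kron (runitD i U) (1%:M : 'M[K]_(ld_dim V)).
Proof.
move=> hU hV; apply: mx_tens_eq3 => u l v.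
rewrite mulmxA assocD_tens -!tens_kron !mulmx1 lunitD_tens runitD_tens -mulmxA
  -mxzpowD ?(ld_alpha_unit hV) //.
by rewrite (_ : - j - 1 + (j + 1) = 0) ?mulmx1 ?tensZr ?tensZl //; lia.
Qed.

End Coherence.

Unset Implicit Arguments. Set Strict Implicit. Set Printing Implicit Defensive.

Theorem proposition6p2 (K : fieldType) (hK : [pchar K] =i pred0)
  (i j : int) (h : nat) (H : HomBialg K h) (hH : is_HomBialgebra H) :
  LongDimod_monoidal H i j.
Proof.
split; first by move=> U V hU hV; exact: (tensD_LongDimod i j hH hU hV).
split; first exact: (unitD_LongDimod hH).
split; first by move=> U U' V V' f g _ _ _ _ hf hg; exact: (kron_LDmorph H i j hf hg).
split; first by move=> U V _ _; exact: kron1.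
split; first by move=> *; rewrite kron_mul.
split; first by move=> U V W hU hV hW; exact: (assocD_iso i j hH V hU hW).
split; first by move=> U hU; exact: (lunitD_iso i j hH hU).
split; first by move=> U hU; exact: (runitD_iso i j hH hU).
split; first by move=> U U' V V' W W' f g k hU hU' _ _ hW hW' hf hg hk;
  exact: (assocD_natural i j hU hU' hW hW' hf hg hk).
split; first by move=> U U' f hU hU' hf; exact: (lunitD_natural j hU hU' hf).
split; first by move=> U U' f hU hU' hf; exact: (runitD_natural i hU hU' hf).
split; first by move=> U V W X hU hV hW hX; exact: (assocD_pentagon i j hU hV hW hX).
by move=> U V hU hV; exact: (assocD_triangle i j hU hV).
Qed.
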